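(* Let $I$ be a finite or infinite non-empty index set and let $\mathbb{K}$ be a positive commutative monoid such that the inner consistency property holds for $\mathbb{K}$-relations via a join operation $\bowtie_{\mathbb{K}}$. Then the inner consistency property holds for $\mathbb{K}^I_{\mathrm{fin}}$-relations via the component-wise join operation $\bowtie^I_{\mathbb{K}}$. Furthermore, if $\bowtie_{\mathbb{K}}$ produces $c$-sparse witnesses for some positive real $c$, then for $\mathbb{K}^I_{\mathrm{fin}}$-relations $R,S$ the witness $R\bowtie^I_{\mathbb{K}}S$ is $cd$-sparse, where $d$ is any bound on the number of non-zero components of the annotation of any tuple in the supports of $R$ or $S$. In particular, if $I$ is finite and the inner consistency property holds for $\mathbb{K}$-relations with sparse witnesses, then the inner consistency property holds for $\mathbb{K}^I$-relations with sparse witnesses.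
   Context: Positive: $p+q=0\Rightarrow p=q=0$. $\mathbb{K}^I$: maps $I\to K$ with pointwise addition; $\mathbb{K}^I_{\mathrm{fin}}$: those with finitely many non-zero values. For a finite attribute set $X$ (attributes have domains), a $\mathbb{M}$-relation over $X$ is a map $R$ from $X$-tuples to the monoid's universe with finite support $R'=\{t:R(t)\ne0\}$; $t[Y]$ is restriction; marginals $R[Y](t)=\sum_{r\in R',r[Y]=t}R(r)$. $R(X),S(Y)$ are inner consistent if $R[X\cap Y]=S[X\cap Y]$; a $W$ over $X\cup Y$ witnesses their consistency if $W[X]=R$, $W[Y]=S$. A join operation assigns to each pair of inner consistent $\mathbb{K}$-relations $R(X),S(Y)$ a $\mathbb{K}$-relation $R\bowtie_{\mathbb{K}}S$ over $X\cup Y$; the inner consistency property holds via it if $R\bowtie_{\mathbb{K}}S$ always witnesses consistency of $R,S$. It produces $c$-sparse witnesses if moreover $|(R\bowtie_{\mathbb{K}}S)'|\le(|R'|+|S'|)c$ always. The inner consistency property holds with sparse witnesses if there is $c>0$ such that any two inner consistent relations have a witness $W$ with $|W'|\le(|R'|+|S'|)c$. Component-wise join: for inner consistent $\mathbb{K}^I_{\mathrm{fin}}$-relations $R(X),S(Y)$, take a fresh attribute $C$ with domain $I$, define $\mathbb{K}$-relations $R_0(X\cup\{C\})$, $S_0(Y\cup\{C\})$ by $R_0(r,i)=R(r)(i)$, $S_0(s,i)=S(s)(i)$, and let $(R\bowtie^I_{\mathbb{K}}S)(t)(i)=(R_0\bowtie_{\mathbb{K}}S_0)(t,i)$ for $X\cup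 Y$-tuples $t$ and $i\in I$. *)

From HB Require Import structures.
From mathcomp Require Import all_boot all_order all_algebra.
From mathcomp Require Import finmap.
From mathcomp Require Import boolp functions.
From Stdlib Require Import ClassicalEpsilon.
From Stdlib Require Import Reals.

Set Implicit Arguments.
Unset Strict Implicit.
Unset Printing Implicit Defensive.

Import GRing.Theory.
Local Open Scope fset_scope.
Local Open Scope ring_scope.

(* An attribute universe is a choiceType [A] together with a domain     *)
(* map [dom : A -> Type].  A schema is a finite set of attributes       *)

Section Tuples.
Variables (A : choiceType) (dom : A -> Type).

Definition tup (X : {fset A}) := forall a : X, dom (fsval a).

Definition restr (X Y : {fset A}) (H : Y `<=` X) (t : tup X) : tup Y :=
  fun a => t (fincl H a).

(* Extension of a Z0-tuple t by the value i (of a fresh attribute C with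
   domain I, eC : dom C = I) to a tuple over a schema Z contained in C |` Z0. *)
Lemma ext_mem (Z0 Z : {fset A}) (C : A) (H : Z `<=` C |` Z0) (a : Z) :
  fsval a != C -> fsval a \in Z0.
Proof.
move=> ne; have := fsubsetP H _ (fsvalP a).
by rewrite in_fset1U (negbTE ne).
Qed.

Definition ext_tup (I : Type) (Z0 Z : {fset A}) (C : A) (eC : dom C = I)
    (H : Z `<=` C |` Z0) (t : tup Z0) (i : I) : tup Z :=
  fun a =>
    match fsval a =P C with
    | ReflectT e => eq_rect_r dom (eq_rect_r (fun T : Type => T) i eC) e
    | ReflectF ne => t [` ext_mem H (introN eqP ne)]
    end.

End Tuples.

Section Relations.
Variable (M : nmodType).

Definition enumerates (T : Type) (f : T -> M) (s : seq T) :=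
  List.NoDup s /\ forall t, List.In t s <-> f t <> 0.

Definition finsupp (T : Type) (f : T -> M) := exists s : seq T, enumerates f s.

(* a chosen enumeration of the support (meaningful when finsupp f) *)
Definition supp_list (T : Type) (f : T -> M) : seq T :=
  epsilon (inhabits [::]) (enumerates f).

Definition supp_size (T : Type) (f : T -> M) : nat := size (supp_list f).

Variables (A : choiceType) (dom : A -> Type).

Definition is_rel (X : {fset A}) (R : tup dom X -> M) := finsupp R.

Definition marg (X Y : {fset A}) (H : Y `<=` X) (R : tup dom X -> M)
    : tup dom Y -> M :=
  fun t => \sum_(r <- supp_list R | `[< restr H r = t >]) R r.

Definition inner_consistent (X Y : {fset A})
    (R : tup dom X -> M) (S : tup dom Y -> M) :=
  marg (fsubsetIl X Y) R = marg (fsubsetIr X Y) S.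

Definition witnesses (X Y : {fset A})
    (R : tup dom X -> M) (S : tup dom Y -> M) (W : tup dom (X `|` Y) -> M) :=
  marg (fsubsetUl X Y) W = R /\ marg (fsubsetUr X Y) W = S.

End Relations.

(* A (total) join operation on M-relations; only its values on inner
   consistent pairs matter. *)
Definition join_op (M : nmodType) (A : choiceType) (dom : A -> Type) :=
  forall X Y : {fset A},
    (tup dom X -> M) -> (tup dom Y -> M) -> (tup dom (X `|` Y) -> M).

Section Properties.
Variables (M : nmodType) (A : choiceType) (dom : A -> Type).
Variable (isrel : forall X : {fset A}, (tup dom X -> M) -> Prop).
(* [isrel] is the predicate "is an M-relation"; it is [is_rel] for
   K-relations and [is_rel] plus finiteness of every annotation for
   K^I_fin-relations. *)

Definition icp_via (join : join_op M dom) :=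
  forall (X Y : {fset A}) (R : tup dom X -> M) (S : tup dom Y -> M),
    isrel R -> isrel S -> inner_consistent R S ->
    isrel (join X Y R S) /\ witnesses R S (join X Y R S).

Definition sparse_via (join : join_op M dom) (c : R) :=
  icp_via join /\
  forall (X Y : {fset A}) (R : tup dom X -> M) (S : tup dom Y -> M),
    isrel R -> isrel S -> inner_consistent R S ->
    (INR (supp_size (join X Y R S))
       <= (INR (supp_size R) + INR (supp_size S)) * c)%R.

Definition icp_sparse :=
  exists c : R, (0 < c)%R /\
  forall (X Y : {fset A}) (R : tup dom X -> M) (S : tup dom Y -> M),
    isrel R -> isrel S -> inner_consistent R S ->
    exists W : tup dom (X `|` Y) -> M,
      isrel W /\ witnesses R S W /\
      (INR (supp_size W) <= (INR (supp_size R) + INR (supp_size S)) * c)%R.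

End Properties.

(* K^I_fin-relations: (I -> K)-valued relations (K^I with pointwise
   addition) with finite support all of whose annotations have finitely
   many non-zero components. *)
Definition is_fin_rel (K : nmodType) (I : Type) (A : choiceType)
    (dom : A -> Type) (X : {fset A}) (R : tup dom X -> (I -> K)) :=
  is_rel R /\ forall t, finsupp (R t).

(* The component-wise join.  [fresh Z] is a chosen attribute not in Z  *)
(* with domain I (witnessed by [efresh Z : dom (fresh Z) = I]).          *)

Section CompJoin.
Variables (K : nmodType) (I : Type) (A : choiceType) (dom : A -> Type).
Variables (fresh : {fset A} -> A) (efresh : forall Z, dom (fresh Z) = I).

(* R_0 over C |` X:  R_0(r, i) = R(r)(i) *)
Definition lift_rel (C : A) (eC : dom C = I) (X : {fset A})
    (R : tup dom X -> (I -> K)) : tup dom (C |` X) -> K :=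
  fun u => R (restr (fsubsetU1 C X) u)
             (eq_rect _ (fun T : Type => T) (u [` fset1U1 C X]) _ eC).

Lemma comp_join_sub (C : A) (X Y : {fset A}) :
  (C |` X) `|` (C |` Y) `<=` C |` (X `|` Y).
Proof.
apply/fsubsetP => a; rewrite !inE.
by case/orP => /orP [] ->; rewrite ?orbT.
Qed.

(* (R join^I S)(t)(i) = (R_0 join S_0)(t, i) *)
Definition comp_join (join : join_op K dom) : join_op (I -> K) dom :=
  fun X Y R S t i =>
    let C := fresh (X `|` Y) in
    join _ _ (lift_rel (efresh (X `|` Y)) R) (lift_rel (efresh (X `|` Y)) S)
      (ext_tup (efresh (X `|` Y)) (@comp_join_sub C X Y) t i).

End CompJoin.

(* Since the fresh attribute C has domain I, an (I -> K)-valued relation R over X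
   is the same thing as the K-relation R_0(r, i) = R(r)(i) over C |` X: tuples
   over C |` X are pairs (r, i).  Under this flattening supports correspond,
   R_0' = {(r, i) | r in R', R(r)(i) <> 0}. *)

From Pilot Require Import Defs.
From mathcomp Require Import all_boot all_order all_algebra.
From mathcomp Require Import finmap.
From mathcomp Require Import boolp functions.
From Stdlib Require Import Reals ClassicalEpsilon.

Set Implicit Arguments.
Unset Strict Implicit.
Unset Printing Implicit Defensive.
Local Open Scope fset_scope.
Local Open Scope ring_scope.

Lemma memP_In (T : eqType) (x : T) (s : seq T) : reflect (List.In x s) (x \in s).
Proof.
elim: s => [|y s IH] /=; first by right.
by rewrite in_cons; apply: (iffP orP) => [[/eqP->|/IH]|[->|/IH]]; auto.
Qed.

Lemma uniqP_NoDup (T : eqType) (s : seq T) : reflect (List.NoDup s) (uniq s).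
Proof.
elim: s => [|x s IH] /=; first by left; constructor.
apply: (iffP andP) => [[/memP_In xs /IH]|]; first by constructor.
by case/List.NoDup_cons_iff => /memP_In xs /IH.
Qed.

(* Tuples and annotations live in arbitrary types; [{classic T}] equips them with
   a classical decidable equality, so that the seq and bigop libraries apply. *)
Section Support.
Variables (M : nmodType) (T : Type).
Implicit Types (f : T -> M) (s : seq {classic T}).

Lemma cover_finsupp f s : (forall t, f t != 0 -> t \in s) -> Defs.finsupp f.
Proof.
move=> fs; exists [seq t <- undup s | f t != 0]; split.
  by apply/(@uniqP_NoDup {classic T}); rewrite filter_uniq ?undup_uniq.
move=> t; split=> [/(@memP_In {classic T})|/eqP ft].
  by rewrite mem_filter => /andP[/eqP].
by apply/(@memP_In {classic T}); rewrite mem_filter mem_undup ft fs.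
Qed.

Lemma enumerates_supp_list f : Defs.finsupp f -> enumerates f (supp_list f).
Proof. by case=> s fs; apply: epsilon_spec; exists s. Qed.

Lemma supp_list_uniq f : Defs.finsupp f -> uniq (supp_list f : seq {classic T}).
Proof. by case/enumerates_supp_list => /(@uniqP_NoDup {classic T}). Qed.

Lemma mem_supp_list f (t : T) :
  Defs.finsupp f -> ((t : {classic T}) \in (supp_list f : seq {classic T})) = (f t != 0).
Proof.
case/enumerates_supp_list => _ fs.
by apply/(@memP_In {classic T})/idP => [/fs/eqP //|/eqP/fs].
Qed.

Lemma enumerates_supp_size f s : enumerates f s -> supp_size f = size s.
Proof.
move=> fs; have ffin : Defs.finsupp f by exists s.
case: fs => /(@uniqP_NoDup {classic T}) us fs; rewrite /supp_size.
apply: (@perm_size {classic T}); apply: uniq_perm => [||t]; first exact: supp_list_uniq.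
  exact: us.
rewrite mem_supp_list //.
by apply/idP/(@memP_In {classic T}) => [/eqP/fs|/fs/eqP].
Qed.

Lemma exists_neq0 f : f <> 0 -> exists t, f t != 0.
Proof.
move=> f0; apply: contra_notP f0 => /forallNP f0; apply: funext => t.
by apply/eqP/negPn/negP/f0.
Qed.

Lemma supp_size_gt0 f : Defs.finsupp f -> f <> 0 -> (0 < supp_size f)%nat.
Proof.
move=> ffin /exists_neq0[t ft].
by rewrite /supp_size; case: (supp_list f) (mem_supp_list t ffin) => //=; rewrite ft.
Qed.

End Support.

Section SumSupport.
Variables (M : nmodType) (T : eqType).

Lemma big_supp_cover (g : T -> M) (P : pred T) (s1 s2 : seq T) :
  uniq s1 -> uniq s2 ->
  (forall t, P t -> g t != 0 -> t \in s1) ->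
  (forall t, P t -> g t != 0 -> t \in s2) ->
  \sum_(t <- s1 | P t) g t = \sum_(t <- s2 | P t) g t.
Proof.
move=> us1 us2 s1g s2g; apply: perm_big_supp_cond.
apply: uniq_perm; rewrite ?filter_uniq // => t; rewrite !mem_filter.
by case: (P t) (g t != 0) (s1g t) (s2g t) => [] [] // -> // ->.
Qed.

Lemma big_pred1_supp (g : T -> M) (s : seq T) (a : T) :
  uniq s -> (g a != 0 -> a \in s) -> \sum_(t <- s | t == a) g t = g a.
Proof.
move=> us sa; rewrite (@big_supp_cover _ _ _ [:: a]) //.
- by rewrite big_mkcond big_seq1 eqxx.
- by move=> t /eqP-> /sa.
- by move=> t /eqP->; rewrite mem_seq1.
Qed.

End SumSupport.

Lemma match_reflect_eq (P : Prop) (b : bool) (r : reflect P b) (T : Type)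
    (f : P -> T) (g : ~ P -> T) (v : T) :
  (forall p, f p = v) -> (forall np, g np = v) ->
  match r with ReflectT p => f p | ReflectF np => g np end = v.
Proof. by case: r. Qed.

Section Tuples.
Variables (A : choiceType) (dom : A -> Type).

Lemma tup_irr (X : {fset A}) (t : tup dom X) (x : A) (p q : x \in X) :
  t [` p] = t [` q].
Proof. by rewrite (bool_irrelevance p q). Qed.

Lemma restr_restr (X Y Z : {fset A}) (hYX : Y `<=` X) (hZY : Z `<=` Y)
  (hZX : Z `<=` X) (t : tup dom X) : restr hZY (restr hYX t) = restr hZX t.
Proof.
apply: functional_extensionality_dep => -[x xZ]; rewrite /restr /fincl.
exact: (@tup_irr X t x).
Qed.

Variables (I : Type) (C : A) (eC : dom C = I).

Definition tup_coord (Z : {fset A}) (hC : C \in Z) (u : tup dom Z) : I :=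
  eq_rect _ (fun T : Type => T) (u [` hC]) _ eC.

Lemma tup_coord_restr (Z W : {fset A}) (hWZ : W `<=` Z) (hC : C \in Z)
    (hCW : C \in W) (u : tup dom Z) :
  tup_coord hCW (restr hWZ u) = tup_coord hC u.
Proof. by rewrite /tup_coord /restr /fincl /= (tup_irr u _ hC). Qed.

(* Z is only assumed to lie between Z0 and C |` Z0 because the schemas met below,
   such as (C |` X) `|` (C |` Y), are equal but not convertible to C |` Z0. *)
Section Frame.
Variables (Z0 Z : {fset A}) (hZ : Z `<=` C |` Z0) (hZ0 : Z0 `<=` Z).
Variables (hC : C \in Z) (nC : C \notin Z0).

Lemma ext_tup_fresh t i :
  ext_tup eC hZ t i [` hC] = eq_rect_r (fun T : Type => T) i eC.
Proof.
apply: match_reflect_eq => [e|ne]; last by case: (ne erefl).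
by rewrite (eq_irrelevance e erefl).
Qed.

Lemma ext_tup_old t i x (xZ : x \in Z) (xZ0 : x \in Z0) :
  x != C -> ext_tup eC hZ t i [` xZ] = t [` xZ0].
Proof.
move=> /eqP xC; apply: match_reflect_eq => [/= e|ne]; first by case: xC.
exact: (@tup_irr _ t x).
Qed.

Lemma restr_ext t i : restr hZ0 (ext_tup eC hZ t i) = t.
Proof.
apply: functional_extensionality_dep => -[x xZ0]; apply: ext_tup_old.
by apply: contraNneq nC => <-.
Qed.

Lemma tup_coord_ext t i : tup_coord hC (ext_tup eC hZ t i) = i.
Proof. by rewrite /tup_coord ext_tup_fresh; case: I / eC i. Qed.

Lemma ext_restr_coord u : ext_tup eC hZ (restr hZ0 u) (tup_coord hC u) = u.
Proof.
apply: functional_extensionality_dep => -[x xZ].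
case: (x =P C) => [e|/eqP ne].
  subst x; rewrite (bool_irrelevance xZ hC) ext_tup_fresh /tup_coord.
  by case: I / eC.
have xZ0 : x \in Z0 by move/fsubsetP/(_ x xZ): hZ; rewrite in_fset1U (negbTE ne).
rewrite (ext_tup_old _ _ _ xZ0 ne) /restr /fincl /=; exact: tup_irr.
Qed.

Lemma ext_tupP t i u :
  ext_tup eC hZ t i = u <-> t = restr hZ0 u /\ i = tup_coord hC u.
Proof.
split=> [<-|[-> ->]]; last exact: ext_restr_coord.
by rewrite restr_ext tup_coord_ext.
Qed.

Lemma ext_tup_inj t i t' i' :
  ext_tup eC hZ t i = ext_tup eC hZ t' i' -> t = t' /\ i = i'.
Proof. by move/ext_tupP; rewrite restr_ext tup_coord_ext. Qed.

End Frame.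

Section TwoFrames.
Variables (Z0 Z : {fset A}) (hZ : Z `<=` C |` Z0) (hZ0 : Z0 `<=` Z).
Variables (hC : C \in Z) (nC : C \notin Z0).
Variables (W0 W : {fset A}) (hW : W `<=` C |` W0) (hW0 : W0 `<=` W).
Variables (hCW : C \in W) (hWZ : W `<=` Z) (hW0Z0 : W0 `<=` Z0).

Lemma restr_ext_tup t i :
  restr hWZ (ext_tup eC hZ t i) = ext_tup eC hW (restr hW0Z0 t) i.
Proof.
rewrite -[LHS](ext_restr_coord hW hW0 hCW); congr ext_tup.
  have hW0Z : W0 `<=` Z by apply: fsubset_trans hW0Z0 hZ0.
  by rewrite !restr_restr -(restr_restr hZ0 hW0Z0 hW0Z) (restr_ext hZ hZ0 nC).
by rewrite tup_coord_restr tup_coord_ext.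
Qed.

End TwoFrames.
End Tuples.

Section Flatten.
Variables (A : choiceType) (dom : A -> Type) (I : Type) (C : A) (eC : dom C = I).
Variables (K : nmodType) (Z0 Z : {fset A}) (hZ : Z `<=` C |` Z0) (hZ0 : Z0 `<=` Z).
Variables (hC : C \in Z) (nC : C \notin Z0).
Variables (F : tup dom Z -> K) (G : tup dom Z0 -> I -> K).
Hypothesis FE : forall t i, F (ext_tup eC hZ t i) = G t i.

Lemma flatE u : F u = G (restr hZ0 u) (tup_coord eC hC u).
Proof. by rewrite -FE ext_restr_coord. Qed.

Lemma unflat_fin_rel : is_rel F -> is_fin_rel G.
Proof.
move=> Frel; have memF t i : G t i != 0 ->
    (ext_tup eC hZ t i : {classic _}) \in (supp_list F : seq {classic _}).
  by rewrite mem_supp_list // FE.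
split=> [|t].
  apply: (cover_finsupp
    (s := [seq (restr hZ0 u : {classic _}) | u : {classic _} <- supp_list F])).
  move=> t /eqP/exists_neq0[i /memF Fti]; apply/mapP.
  by exists (ext_tup eC hZ t i); rewrite ?restr_ext.
apply: (cover_finsupp
  (s := [seq (tup_coord eC hC u : {classic I}) | u : {classic _} <- supp_list F])).
move=> i /memF Fti; apply/mapP.
by exists (ext_tup eC hZ t i); rewrite ?tup_coord_ext.
Qed.

Definition flat_supp : seq {classic (tup dom Z)} :=
  [seq (ext_tup eC hZ t i : {classic _}) | t : {classic _} <- supp_list G,
                                           i : {classic I} <- supp_list (G t)].

Hypothesis Gfin : is_fin_rel G.

Lemma flat_supp_uniq : uniq flat_supp.
Proof.
case: Gfin => Grel Gtfin.
apply: allpairs_uniq_dep => [||[t i] [t' i'] _ _ /= e].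
- exact: supp_list_uniq.
- by move=> t _; apply: supp_list_uniq.
by case: (ext_tup_inj hZ0 hC nC e) => -> ->.
Qed.

Lemma mem_flat_supp u : (u \in flat_supp) = (F u != 0).
Proof.
case: Gfin => Grel Gtfin; apply/idP/idP.
  case/allpairsPdep => t [i [Gt Gti ->]].
  by rewrite FE -mem_supp_list.
rewrite flatE => Gu; rewrite -(ext_restr_coord eC hZ hZ0 hC u).
apply: (@allpairs_f_dep {classic _} (fun=> {classic I})); last by rewrite mem_supp_list.
by rewrite mem_supp_list //; apply: contraNneq Gu => ->.
Qed.

Lemma enumerates_flat_supp : enumerates F flat_supp.
Proof.
split; first exact/(@uniqP_NoDup {classic _})/flat_supp_uniq.
move=> u; split=> [/(@memP_In {classic _})|/eqP Fu].
  by rewrite mem_flat_supp => /eqP.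
by apply/(@memP_In {classic _}); rewrite mem_flat_supp.
Qed.

Lemma supp_size_flat :
  supp_size F = (\sum_(t <- (supp_list G : seq {classic _})) supp_size (G t))%nat.
Proof.
by rewrite (enumerates_supp_size enumerates_flat_supp) size_allpairs_dep sumnE big_map.
Qed.

Lemma supp_size_unflat_le : (supp_size G <= supp_size F)%nat.
Proof.
case: Gfin => Grel Gtfin.
rewrite supp_size_flat {1}/supp_size -(@sum1_size {classic _}).
rewrite !big_seq; apply: leq_sum => t.
by rewrite mem_supp_list // => /eqP; apply: supp_size_gt0.
Qed.

Lemma supp_size_flat_le d :
  (forall t, G t <> 0 -> (supp_size (G t) <= d)%nat) ->
  (supp_size F <= supp_size G * d)%nat.
Proof.
case: Gfin => Grel Gtfin Gd.
rewrite supp_size_flat {2}/supp_size -(@sum1_size {classic _}).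
rewrite big_distrl /= !big_seq; apply: leq_sum => t.
by rewrite mem_supp_list // mul1n => /eqP; apply: Gd.
Qed.

Variables (W0 W : {fset A}) (hW : W `<=` C |` W0) (hW0 : W0 `<=` W).
Variables (hCW : C \in W) (nCW : C \notin W0) (hWZ : W `<=` Z) (hW0Z0 : W0 `<=` Z0).

Lemma marg_flat v :
  marg hWZ F v = marg hW0Z0 G (restr hW0 v) (tup_coord eC hCW v).
Proof.
have Frel : is_rel F by exists flat_supp; apply: enumerates_flat_supp.
case: Gfin => Grel Gtfin; rewrite /marg fct_sumE.
transitivity (\sum_(u <- flat_supp | `[< restr hWZ u = v >]) F u).
  apply: (@big_supp_cover _ {classic _}) => [||u _|u _].
  - exact: supp_list_uniq.
  - exact: flat_supp_uniq.
  - by rewrite mem_supp_list.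
  - by rewrite mem_flat_supp.
rewrite big_mkcond big_allpairs_dep [RHS]big_mkcond /=; apply: eq_bigr => t _.
have restrE i : restr hWZ (ext_tup eC hZ t i) = ext_tup eC hW (restr hW0Z0 t) i.
  exact: restr_ext_tup.
case: (asboolP (restr hW0Z0 t = restr hW0 v)) => [tv|tv]; last first.
  rewrite big1 // => i _; rewrite restrE.
  by case: asboolP => // /(ext_tupP eC hW hW0 hCW nCW)[].
rewrite -(@big_pred1_supp _ {classic I} _ (supp_list (G t))); first last.
- by rewrite mem_supp_list.
- exact: supp_list_uniq.
rewrite [RHS]big_mkcond; apply: eq_bigr => i _; rewrite restrE FE.
congr (if _ then _ else _).
by apply/asboolP/eqP; rewrite (ext_tupP eC hW hW0 hCW nCW) tv; [case | split].
Qed.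

End Flatten.

Section Lift.
Variables (A : choiceType) (dom : A -> Type) (I : Type) (C : A) (eC : dom C = I).
Variables (K : nmodType) (X : {fset A}) (R : tup dom X -> I -> K).
Hypothesis nCX : C \notin X.

Lemma lift_rel_ext t i : lift_rel eC R (ext_tup eC (fsubset_refl _) t i) = R t i.
Proof.
rewrite /lift_rel.
exact: (congr2 R (restr_ext _ _ _ nCX t i) (tup_coord_ext _ _ (fset1U1 C X) t i)).
Qed.

Hypothesis Rfin : is_fin_rel R.

Lemma lift_rel_rel : is_rel (lift_rel eC R).
Proof.
exists (flat_supp eC (fsubset_refl _) R).
exact: (enumerates_flat_supp (fsubsetU1 C X) (fset1U1 C X) nCX lift_rel_ext).
Qed.

Lemma supp_size_lift_rel d :
  (forall t, R t <> 0 -> (supp_size (R t) <= d)%nat) ->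
  (supp_size (lift_rel eC R) <= supp_size R * d)%nat.
Proof.
exact: (supp_size_flat_le (fsubsetU1 C X) (fset1U1 C X) nCX lift_rel_ext Rfin).
Qed.

End Lift.

Section CompJoin.
Variables (K : nmodType) (I : Type) (A : choiceType) (dom : A -> Type).
Variables (fresh : {fset A} -> A) (efresh : forall Z : {fset A}, dom (fresh Z) = I).
Variables (join : join_op K dom) (X Y : {fset A}).
Variables (R : tup dom X -> I -> K) (S : tup dom Y -> I -> K).
Hypothesis nCXY : fresh (X `|` Y) \notin X `|` Y.

Let C := fresh (X `|` Y).
Let eC : dom C = I := efresh (X `|` Y).
Let R0 := lift_rel eC R.
Let S0 := lift_rel eC S.

Let nCX : C \notin X. Proof. by apply: contra nCXY; rewrite inE => ->. Qed.
Let nCY : C \notin Y. Proof. by apply: contra nCXY; rewrite inE orbC => ->. Qed.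
Let nCI : C \notin X `&` Y. Proof. by apply: contra nCX; rewrite inE => /andP[]. Qed.

Let subIC : (C |` X) `&` (C |` Y) `<=` C |` (X `&` Y).
Proof. by rewrite fsetUIr. Qed.
Let subI : X `&` Y `<=` (C |` X) `&` (C |` Y).
Proof. exact: fsetISS (fsubsetU1 C X) (fsubsetU1 C Y). Qed.
Let memCI : C \in (C |` X) `&` (C |` Y).
Proof. by rewrite in_fsetI !fset1U1. Qed.
Let subU : X `|` Y `<=` (C |` X) `|` (C |` Y).
Proof. exact: fsetUSS (fsubsetU1 C X) (fsubsetU1 C Y). Qed.
Let memCU : C \in (C |` X) `|` (C |` Y).
Proof. by rewrite in_fsetU fset1U1. Qed.

Hypotheses (Rfin : is_fin_rel R) (Sfin : is_fin_rel S) (RS : inner_consistent R S).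

Lemma lift_rel_inner_consistent : inner_consistent R0 S0.
Proof.
apply: functional_extensionality_dep => v.
rewrite (marg_flat (fsubsetU1 C X) (fset1U1 C X) nCX (lift_rel_ext eC R nCX) Rfin
  subIC subI memCI nCI (fsubsetIl _ _) (fsubsetIl X Y)).
rewrite (marg_flat (fsubsetU1 C Y) (fset1U1 C Y) nCY (lift_rel_ext eC S nCY) Sfin
  subIC subI memCI nCI (fsubsetIr _ _) (fsubsetIr X Y)).
by rewrite RS.
Qed.

Let W0 := join R0 S0.
Let W := comp_join efresh join R S.
Let WE t i : W0 (ext_tup eC (comp_join_sub C X Y) t i) = W t i. Proof. by []. Qed.

Lemma comp_join_fin_rel : is_rel W0 -> is_fin_rel W.
Proof. exact: (unflat_fin_rel subU memCU nCXY WE). Qed.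

Lemma supp_size_comp_join : is_rel W0 -> (supp_size W <= supp_size W0)%nat.
Proof.
move=> W0rel.
exact: (supp_size_unflat_le subU memCU nCXY WE (comp_join_fin_rel W0rel)).
Qed.

Lemma comp_join_witnesses : is_rel W0 -> witnesses R0 S0 W0 -> witnesses R S W.
Proof.
move=> W0rel [W0R W0S]; have Wfin := comp_join_fin_rel W0rel.
split; apply: functional_extensionality_dep => t; apply: funext => i.
  have := marg_flat subU memCU nCXY WE Wfin (fsubset_refl _) (fsubsetU1 C X)
    (fset1U1 C X) nCX (fsubsetUl _ _) (fsubsetUl X Y) (ext_tup eC (fsubset_refl _) t i).
  rewrite (restr_ext _ _ _ nCX) tup_coord_ext W0R => <-; exact: lift_rel_ext.
have := marg_flat subU memCU nCXY WE Wfin (fsubset_refl _) (fsubsetU1 C Y)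
  (fset1U1 C Y) nCY (fsubsetUr _ _) (fsubsetUr X Y) (ext_tup eC (fsubset_refl _) t i).
rewrite (restr_ext _ _ _ nCY) tup_coord_ext W0S => <-; exact: lift_rel_ext.
Qed.

Let lift_rel_join_witnesses :
  icp_via (fun X (R : tup dom X -> K) => is_rel R) join -> is_rel W0 /\ witnesses R0 S0 W0.
Proof.
move=> icp; apply: icp; last exact: lift_rel_inner_consistent.
  exact (lift_rel_rel eC nCX Rfin).
exact (lift_rel_rel eC nCY Sfin).
Qed.

Lemma comp_join_fin_rel_witnesses :
  icp_via (fun X (R : tup dom X -> K) => is_rel R) join -> is_fin_rel W /\ witnesses R S W.
Proof.
move=> /lift_rel_join_witnesses[W0rel W0wit].
by split; [apply: comp_join_fin_rel | apply: comp_join_witnesses].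
Qed.

Lemma supp_size_comp_join_le c d :
  (0 <= c)%R -> sparse_via (fun X (R : tup dom X -> K) => is_rel R) join c ->
  (forall t, R t <> 0 -> (supp_size (R t) <= d)%nat) ->
  (forall t, S t <> 0 -> (supp_size (S t) <= d)%nat) ->
  (INR (supp_size W) <= (INR (supp_size R) + INR (supp_size S)) * (c * INR d))%R.
Proof.
move=> c0 [/lift_rel_join_witnesses[W0rel _] sparse] Rd Sd.
have W0c := sparse _ _ _ _ (lift_rel_rel eC nCX Rfin) (lift_rel_rel eC nCY Sfin)
  lift_rel_inner_consistent.
have /ssrnat.leP/le_INR WW0 := supp_size_comp_join W0rel.
have /ssrnat.leP/le_INR R0d := supp_size_lift_rel eC nCX Rfin Rd.
have /ssrnat.leP/le_INR S0d := supp_size_lift_rel eC nCY Sfin Sd.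
apply: (Rle_trans _ _ _ WW0); apply: (Rle_trans _ _ _ W0c).
have -> : ((INR (supp_size R) + INR (supp_size S)) * (c * INR d) =
    (INR (supp_size R * d)%nat + INR (supp_size S * d)%nat) * c)%R.
  by rewrite !mult_INR; ring.
by apply: Rmult_le_compat_r => //; apply: Rplus_le_compat.
Qed.

End CompJoin.

Lemma icp_sparse_join (M : nmodType) (A : choiceType) (dom : A -> Type)
    (isrel : forall X : {fset A}, (tup dom X -> M) -> Prop) :
  icp_sparse isrel -> exists c (join : join_op M dom), (0 < c)%R /\ sparse_via isrel join c.
Proof.
case=> c [c0 sparse].
pose small X Y (U : tup dom X -> M) (V : tup dom Y -> M) (W : tup dom (X `|` Y) -> M) :=
  isrel _ W /\ witnesses U V W /\
  (INR (supp_size W) <= (INR (supp_size U) + INR (supp_size V)) * c)%R.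
pose join X Y U V := epsilon (inhabits (fun _ => 0)) (small X Y U V).
have joinP X Y U V : isrel X U -> isrel Y V -> inner_consistent U V ->
    small X Y U V (join X Y U V).
  by move=> UR VR UV; apply: epsilon_spec; apply: sparse.
exists c, join; split=> //.
by split=> X Y U V UR VR UV; have [? [? ?]] := joinP X Y U V UR VR UV.
Qed.

Section FiniteIndex.
Variables (K : nmodType) (I : Type) (l : seq I) (Il : forall i, List.In i l).

Lemma supp_size_le_finite (f : I -> K) : Defs.finsupp f -> (supp_size f <= size l)%nat.
Proof.
move=> ffin; apply: (@uniq_leq_size {classic I}); first exact: supp_list_uniq.
by move=> i _; apply/(@memP_In {classic I}).
Qed.

Lemma fin_rel_finite (A : choiceType) (dom : A -> Type) (X : {fset A})
    (R : tup dom X -> I -> K) :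
  is_rel R -> is_fin_rel R.
Proof.
move=> Rrel; split=> // t; apply: (cover_finsupp (s := l)) => i _.
exact/(@memP_In {classic I}).
Qed.

End FiniteIndex.

Lemma icp_sparse_finite_index (K : nmodType) (I : Type) (A : choiceType)
    (dom : A -> Type) (fresh : {fset A} -> A)
    (efresh : forall Z : {fset A}, dom (fresh Z) = I) :
  (forall Z : {fset A}, fresh Z \notin Z) -> inhabited I ->
  (exists l : seq I, forall i, List.In i l) ->
  icp_sparse (fun X (R : tup dom X -> K) => is_rel R) ->
  icp_sparse (fun X (R : tup dom X -> (I -> K)) => is_rel R).
Proof.
move=> fresh_notin [i0] [l Il] /icp_sparse_join[c [join [c0 sparse]]].
have l0 : (0 < INR (size l))%R.
  by apply: lt_0_INR; case: l Il => [/(_ i0)[]|? ? _]; apply/ssrnat.ltP.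
exists (c * INR (size l))%R; split; first exact: Rmult_lt_0_compat.
move=> X Y R S Rrel Srel RS.
have Rfin := fin_rel_finite Il Rrel; have Sfin := fin_rel_finite Il Srel.
have [[Wrel _] Wwit] :=
  comp_join_fin_rel_witnesses efresh (fresh_notin _) Rfin Sfin RS sparse.1.
exists (comp_join efresh join R S); split=> //; split=> //.
apply: supp_size_comp_join_le => //; first exact: Rlt_le.
  by move=> t _; apply: supp_size_le_finite; case: Rfin.
by move=> t _; apply: supp_size_le_finite; case: Sfin.
Qed.

Theorem proposition31
  (* the positive commutative monoid K *)
  (K : nmodType)
  (K_positive : forall p q : K, p + q = 0 -> p = 0 /\ q = 0)
  (* the non-empty index set I *)
  (I : Type) (I_nonempty : inhabited I)
  (* the attribute universe, and a choice of fresh attributes of domain I *)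
  (A : choiceType) (dom : A -> Type)
  (fresh : {fset A} -> A)
  (fresh_notin : forall Z : {fset A}, fresh Z \notin Z)
  (efresh : forall Z : {fset A}, dom (fresh Z) = I) :
  (* (1) inner consistency via the component-wise join *)
  (forall join : join_op K dom,
     icp_via (fun X (R : tup dom X -> K) => is_rel R) join ->
     icp_via (fun X (R : tup dom X -> (I -> K)) => is_fin_rel R)
       (comp_join efresh join))
  /\
  (* (2) c-sparse witnesses for K give cd-sparse witnesses for K^I_fin *)
  (forall (join : join_op K dom) (c : R),
     (0 < c)%R ->
     sparse_via (fun X (R : tup dom X -> K) => is_rel R) join c ->
     forall (d : nat) (X Y : {fset A})
            (R : tup dom X -> (I -> K)) (S : tup dom Y -> (I -> K)),
       is_fin_rel R -> is_fin_rel S -> inner_consistent R S ->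
       (forall t, R t <> 0 -> leq (supp_size (R t)) d) ->
       (forall t, S t <> 0 -> leq (supp_size (S t)) d) ->
       (INR (supp_size (comp_join efresh join R S))
          <= (INR (supp_size R) + INR (supp_size S)) * (c * INR d))%R)
  /\
  (* (3) for finite I: sparse witnesses for K give sparse witnesses for K^I *)
  ((exists l : seq I, forall i, List.In i l) ->
   icp_sparse (fun X (R : tup dom X -> K) => is_rel R) ->
   icp_sparse (fun X (R : tup dom X -> (I -> K)) => is_rel R)).
Proof.
split.
  move=> join icp X Y R S Rfin Sfin RS.
  exact (comp_join_fin_rel_witnesses efresh (fresh_notin _) Rfin Sfin RS icp).
split; last exact: icp_sparse_finite_index.
move=> join c c0 sparse d X Y R S Rfin Sfin RS.
exact (supp_size_comp_join_le efresh (fresh_notin _) Rfin Sfin RS (Rlt_le _ _ c0) sparse).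
Qed.
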